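(* Let $G$ be a finite simple connected graph. If $c_{\infty}(G)=1$ then every block of $G$ has domination number one.
   Context: Cops and Robber with an infinitely fast robber: the game is played on a graph $G$. A set of cops first choose initial vertices (several cops may share a vertex); then the robber, knowing their positions, chooses a vertex. Then the players move in alternating rounds, cops first. In the cops' turn each cop either stays or moves to an adjacent vertex; in the robber's turn she either stays or moves along any path of $G$ starting at her current vertex that contains no vertex currently occupied by a cop. The cops win if at some point a cop moves to the vertex occupied by the robber. $c_{\infty}(G)$ is the minimum number of cops for which the cops have a strategy that guarantees a win. A block of $G$ is either a maximal 2-connected subgraph of $G$ or an edge of $G$ not contained in any 2-connected subgraph. A block $B$ has domination number one if some vertex $x\in V(B)$ has every other vertex of $B$ adjacent to $x$. *)

From mathcomp Require Import all_boot.
Set Implicit Arguments. Unset Strict Implicit. Unset Printing Implicit Defensive.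

Section Graph.
Variables (T : finType) (e : rel T).

Definition induced_rel (S : {set T}) : rel T :=
  [rel x y | [&& e x y, x \in S & y \in S]].

Definition connected_in (S : {set T}) : Prop :=
  forall x y, x \in S -> y \in S -> connect (induced_rel S) x y.

Definition two_connected (S : {set T}) : Prop :=
  [/\ 3 <= #|S|, connected_in S & forall v, v \in S -> connected_in (S :\ v)].

Definition is_block (B : {set T}) : Prop :=
  (two_connected B /\ forall S : {set T}, B \proper S -> ~ two_connected S)
  \/ (exists u v, [/\ B = [set u; v], e u v &
        forall S : {set T}, u \in S -> v \in S -> ~ two_connected S]).

Definition dom_one (B : {set T}) : Prop :=
  exists2 x, x \in B & forall y, y \in B -> y != x -> e x y.

Variable k : nat.
Definition cops := {ffun 'I_k -> T}.

Definition cop_move (c c' : cops) : Prop :=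
  forall i, c' i = c i \/ e (c i) (c' i).

Definition robber_move (C : cops) (r r' : T) : Prop :=
  exists p : seq T, [/\ path e r p, last r p = r' &
                        all (fun v => v \notin codom C) (r :: p)].

Definition caught (C : cops) (r : T) : Prop := exists i, C i = r.

Definition hist (c : nat -> cops) (r : nat -> T) (n : nat) : seq (cops * T) :=
  [seq (c i, r i) | i <- iota 0 n.+1].

(* Play: cops start at c 0; robber (seeing c 0) picks r 0; in round n the
   cops move from c n to c n.+1 (chosen by the strategy from the history),
   they win if a cop is then on r n, otherwise the robber moves from r n to
   r n.+1.  The strategy [sigma] is winning if every play consistent with it
   (the robber's choices being arbitrary legal moves) is won by the cops
   after finitely many rounds, with all cop moves legal. *)
Definition cops_win : Prop :=
  exists (c0 : cops) (sigma : seq (cops * T) -> cops),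
  forall (c : nat -> cops) (r : nat -> T),
    c 0 = c0 ->
    (forall n, c n.+1 = sigma (hist c r n)) ->
    (forall n, (forall m, m <= n -> ~ caught (c m.+1) (r m)) ->
               robber_move (c n.+1) (r n) (r n.+1)) ->
    exists n, caught (c n.+1) (r n) /\ forall m, m <= n -> cop_move (c m) (c m.+1).

End Graph.

Definition cinf_is (T : finType) (e : rel T) (k : nat) : Prop :=
  cops_win e k /\ forall j, j < k -> ~ cops_win e j.

From mathcomp Require Import all_boot.
Set Implicit Arguments. Unset Strict Implicit. Unset Printing Implicit Defensive.

(* If a 2-connected block B had no dominating vertex, then no vertex outside B
   dominates B either (it could be added to B, contradicting maximality), so
   every vertex x has a non-neighbour [esc x] in B other than x.  A robber who
   always stands on [esc x], x being the cop's position, cannot be caught by a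
   single cop: the cop's next vertex is x or a neighbour of x, hence differs
   from [esc x], and B minus that vertex is connected, so the robber can run
   to the new escape vertex. *)

Section RobberStrategy.
Variables (T : finType) (e : rel T) (k : nat).

Lemma hist_succ (c : nat -> cops T k) (r : nat -> T) n :
  hist c r n.+1 = rcons (hist c r n) (c n.+1, r n.+1).
Proof. by rewrite /hist -(addn1 n.+1) iotaD map_cat /= cats1. Qed.

(* The robber stands on [g C] whenever the cops are at [C].  Her moves must be
   legal even after illegal cop moves, since [cops_win] only checks the
   legality of the cops' moves up to the capture. *)
Lemma positional_robber_wins (g : cops T k -> T) :
  (forall C C', cop_move e C C' -> ~ caught C' (g C)) ->
  (forall C C', ~ caught C' (g C) -> robber_move e C' (g C) (g C')) ->
  ~ cops_win e k.
Proof.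
move=> safe_g move_g [c0 [sigma win]].
pose fix hs n := if n is m.+1 then rcons (hs m) (sigma (hs m), g (sigma (hs m)))
                 else [:: (c0, g c0)].
pose c n := if n is m.+1 then sigma (hs m) else c0.
pose r n := g (c n).
have hist_c : forall n, hist c r n = hs n.
  by elim=> [|n IH] //; rewrite hist_succ IH.
have [|n [caught_n legal]] := win c r erefl (fun n => congr1 sigma (esym (hist_c n))).
  by move=> n free; apply: move_g; apply: free.
exact: safe_g (legal n (leqnn n)) caught_n.
Qed.

End RobberStrategy.

Section Graph.
Variables (T : finType) (e : rel T).
Hypothesis e_sym : symmetric e.

Lemma path_induced_rel S x p :
  path (induced_rel e S) x p -> path e x p /\ all [in S] p.
Proof.
elim: p x => [|y p IH] x //= /andP[/and3P[exy _ yS] /IH[py ay]].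
by rewrite exy py yS ay.
Qed.

Lemma connected_in_setU1 S x a :
  connected_in e S -> a \in S -> e x a -> connected_in e (x |: S).
Proof.
move=> connS aS xa.
have connS' u v : u \in S -> v \in S -> connect (induced_rel e (x |: S)) u v.
  move=> uS vS; apply: connect_sub (connS u v uS vS) => s t /and3P[st sS tS].
  by apply: connect1; rewrite /induced_rel /= st !inE sS tS !orbT.
have x_a : connect (induced_rel e (x |: S)) x a.
  by apply: connect1; rewrite /induced_rel /= xa !inE eqxx aS orbT.
have a_x : connect (induced_rel e (x |: S)) a x.
  by apply: connect1; rewrite /induced_rel /= e_sym xa !inE eqxx aS orbT.
move=> u v; rewrite !inE => /predU1P[->|uS] /predU1P[->|vS].
- exact: connect0.
- exact: connect_trans x_a (connS' _ _ aS vS).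
- exact: connect_trans (connS' _ _ uS aS) a_x.
- exact: connS'.
Qed.

Lemma two_connected_setU1 B x a b :
  two_connected e B -> x \notin B -> a \in B -> b \in B -> a != b ->
  e x a -> e x b -> two_connected e (x |: B).
Proof.
move=> [B3 connB connBv] xB aB bB ab xa xb; split.
- by rewrite (leq_trans B3) // subset_leq_card // subsetUr.
- exact: connected_in_setU1 connB aB xa.
move=> v /setU1P[->|vB]; first by rewrite setU1K.
have vx : v != x by apply: contraNneq xB => <-.
have -> : (x |: B) :\ v = x |: (B :\ v).
  by apply/setP=> z; rewrite !inE; case: (eqVneq z x) => [->|] //=; rewrite eq_sym vx.
have [av|av] := eqVneq a v.
- by apply: connected_in_setU1 (connBv v vB) _ xb; rewrite !inE bB -av eq_sym ab.
- by apply: connected_in_setU1 (connBv v vB) _ xa; rewrite !inE aB av.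
Qed.

Lemma two_connected_setD1 B x : two_connected e B -> connected_in e (B :\ x).
Proof.
case=> _ connB connBv; have [xB|xB] := boolP (x \in B); first exact: connBv.
suff -> : B :\ x = B by [].
by apply/setP=> z; rewrite !inE; case: eqVneq => // ->; rewrite (negbTE xB).
Qed.

Lemma dominating_vertex_in_block (B : {set T}) (x : T) :
  two_connected e B -> (forall S : {set T}, B \proper S -> ~ two_connected e S) ->
  (forall y, y \in B -> y != x -> e x y) -> x \in B.
Proof.
move=> twoB maxB dom; apply: contraT => xB.
have [B3 _ _] := twoB.
have /card_gt1P[a [b [aB bB ab]]] : 1 < #|B| by apply: leq_trans B3.
have nx y : y \in B -> y != x by move=> yB; apply: contraNneq xB => <-.
exfalso; apply: (maxB (x |: B)); first by rewrite properUr // sub1set.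
exact: two_connected_setU1 (dom a aB (nx a aB)) (dom b bB (nx b bB)).
Qed.

Lemma escape_of_not_dom_one (B : {set T}) :
  two_connected e B -> (forall S : {set T}, B \proper S -> ~ two_connected e S) ->
  ~ dom_one e B -> forall x, exists2 y, y \in B & (y != x) && ~~ e x y.
Proof.
move=> twoB maxB nodom x; apply/exists_inP; apply: contraT.
rewrite negb_exists_in => /forall_inP noesc.
have dom y : y \in B -> y != x -> e x y.
  by move=> yB yx; have := noesc y yB; rewrite yx negbK.
by case: nodom; exists x => //; apply: dominating_vertex_in_block dom.
Qed.

Lemma robber_move_in (B : {set T}) (C : cops T 1) r r' :
  connected_in e (B :\ C ord0) -> r \in B :\ C ord0 -> r' \in B :\ C ord0 ->
  robber_move e C r r'.
Proof.
move=> connB rB r'B; have /connectP[p /path_induced_rel[pe pB] ->] := connB _ _ rB r'B.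
have free v : v \in B :\ C ord0 -> v \notin codom C.
  rewrite !inE => /andP[vC _]; apply/negP=> /codomP[i vi].
  by rewrite vi (ord1 i) eqxx in vC.
exists p; split => //=; rewrite free //=.
by apply/allP=> v /(allP pB); apply: free.
Qed.

Lemma one_cop_loses B :
  (forall x, connected_in e (B :\ x)) ->
  (forall x, exists2 y, y \in B & (y != x) && ~~ e x y) ->
  ~ cops_win e 1.
Proof.
move=> connB escape.
pose esc x := odflt x [pick y in B | (y != x) && ~~ e x y].
have escP x : [&& esc x \in B, esc x != x & ~~ e x (esc x)].
  rewrite /esc; case: pickP => [y /andP[-> ->] //|none].
  by have [y yB /andP[yx nxy]] := escape x; have := none y; rewrite yB yx nxy.
have caught1 (C : cops T 1) y : caught C y -> C ord0 = y.
  by case=> i; rewrite (ord1 i).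
apply: (positional_robber_wins (g := fun C => esc (C ord0))).
- move=> C C' /(_ ord0) mv /caught1 C'esc; have /and3P[_ nx nex] := escP (C ord0).
  case: mv => [C'C|adj].
  + by rewrite -C'esc C'C eqxx in nx.
  + by rewrite -C'esc adj in nex.
- move=> C C' free /=; apply: (robber_move_in (connB _)).
  + have /and3P[escB _ _] := escP (C ord0); rewrite !inE escB andbT.
    by apply/eqP=> escC'; apply: free; rewrite escC'; exists ord0.
  + by have /and3P[escB nx _] := escP (C' ord0); rewrite !inE escB nx.
Qed.

Lemma dom_oneP B :
  reflect (dom_one e B) [exists x in B, [forall y in B, (y != x) ==> e x y]].
Proof.
apply: (iffP exists_inP) => -[x xB dom]; exists x => //.
- by move=> y yB; apply/implyP; move/forall_inP: dom; apply.
- by apply/forall_inP=> y yB; apply/implyP; apply: dom.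
Qed.

End Graph.

Theorem mainTheorem9 (T : finType) (e : rel T)
  (e_sym : symmetric e) (e_irr : irreflexive e)
  (G_conn : connected_in e [set: T])
  (h : cinf_is e 1) :
  forall B : {set T}, is_block e B -> dom_one e B.
Proof.
move=> B [[twoB maxB]|[u [v [-> euv _]]]]; last first.
  by exists u; rewrite ?inE ?eqxx // => y /set2P[|] -> //; rewrite eqxx.
apply/dom_oneP; apply: contraT => /dom_oneP nodom.
have [win _] := h; exfalso; apply: (one_cop_loses (B := B) _ _ win).
- by move=> x; apply: two_connected_setD1.
- exact: escape_of_not_dom_one.
Qed.
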